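(* Let $c,\alpha,\beta>0$, $\mathbf A\in\mathbb{R}^{2\times2}$ symmetric positive definite, $\rho>0$, $\mathbf m\in\mathbb{R}^2$, $H\in\mathbb{R}$, and let $$\phi(\tilde\rho)=\rho+c\big\langle(2c\alpha\mathbf A+\tilde\rho\mathbf I)^{-1}\mathbf m,\ \alpha\mathbf A(2c\alpha\mathbf A+\tilde\rho\mathbf I)^{-1}\mathbf m\big\rangle+c\,(2c\beta+\tilde\rho)^{-2}\beta H^2.$$ If $c$ is large enough that $\frac{1}{4c^2}\big(\mathbf m^{\mathrm T}(\alpha\mathbf A)^{-2}\mathbf m+\beta^{-2}H^2\big)<1$, then for every initial guess $\tilde\rho^{(0)}\in(0,\infty)$ the iteration $\tilde\rho^{(\ell+1)}=\phi(\tilde\rho^{(\ell)})$, $\ell=0,1,2,\dots$, converges to the unique fixed point $\rho^*\in(0,\infty)$ of $\phi$.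
   Context: None beyond the statement: $\mathbf I$ is the $2\times2$ identity and $\langle\cdot,\cdot\rangle$ the Euclidean inner product. (The fixed point $\rho^*$ is the density component of the proximal operator of the WFR cost $J(\mathbf m,\rho,H)=\alpha\rho^{-1}\mathbf m^{\mathrm T}\mathbf A\mathbf m+\beta\rho^{-1}H^2$.) *)

From HB Require Import structures.
From mathcomp Require Import all_boot all_order all_algebra.
From mathcomp Require Import all_classical all_reals all_analysis.
Set Implicit Arguments. Unset Strict Implicit. Unset Printing Implicit Defensive.
Import Order.TTheory GRing.Theory Num.Theory.
Local Open Scope ring_scope.

Definition inner2 {R : realType} (u v : 'cV[R]_2) : R := (u^T *m v) 0 0.

Definition spd2 {R : realType} (A : 'M[R]_2) : Prop :=
  A^T = A /\ forall v : 'cV[R]_2, v != 0 -> 0 < inner2 v (A *m v).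

Definition phi {R : realType} (c alpha beta rho : R) (A : 'M[R]_2)
    (m : 'cV[R]_2) (H : R) (rt : R) : R :=
  let M := invmx (2 * c * alpha *: A + rt%:M) in
  rho + c * inner2 (M *m m) ((alpha *: A) *m (M *m m))
      + c * (2 * c * beta + rt) ^- 2 * beta * H ^+ 2.

From HB Require Import structures.
From mathcomp Require Import all_boot all_order all_algebra.
From mathcomp Require Import all_classical all_reals all_analysis.
From mathcomp Require Import ring.
Import Order.TTheory GRing.Theory Num.Theory.
Import numFieldNormedType.Exports.
Local Open Scope classical_set_scope.
Local Open Scope ring_scope.

(* In an eigenbasis of A, with eigenvalues l1, l2 > 0, phi is rho plus three
   terms of the form c a w / (2 c a + r)^2 (with a = alpha l1, alpha l2, beta and
   w the squared components of m, resp. H^2).  Each term has Lipschitz constant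
   w / (4 c^2 a^2) on [0, +oo), and these constants add up exactly to the
   quantity assumed to be < 1.  Hence phi is a contraction of [0, +oo) into
   [rho, +oo), and Banach's fixed point theorem applies. *)

Lemma sum_ord2 (V : nmodType) (F : 'I_2 -> V) : \sum_i F i = F 0 + F 1.
Proof. by rewrite big_ord_recl big_ord1; congr (_ + F _); apply: val_inj. Qed.

Lemma ord2P (i : 'I_2) : i = 0 \/ i = 1.
Proof. by case: i => [[|[|//]]] ?; [left|right]; apply: val_inj. Qed.

Section Matrix2.
Context {R : realType}.
Implicit Types (K : 'M[R]_2) (x y : 'cV[R]_2).

Lemma inner2E x y : inner2 x y = x 0 0 * y 0 0 + x 1 0 * y 1 0.
Proof. by rewrite /inner2 mxE sum_ord2 !mxE. Qed.

Lemma mulmx2E K x i : (K *m x) i 0 = K i 0 * x 0 0 + K i 1 * x 1 0.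
Proof. by rewrite mxE sum_ord2. Qed.

Definition col2 (a b : R) : 'cV[R]_2 := \matrix_(i, j) (if i == 0 then a else b).

Lemma col2E0 (a b : R) : col2 a b 0 0 = a. Proof. by rewrite mxE. Qed.
Lemma col2E1 (a b : R) : col2 a b 1 0 = b. Proof. by rewrite mxE. Qed.

Lemma col2_eq0 (a b : R) : (col2 a b == 0) = (a == 0) && (b == 0).
Proof.
apply/eqP/andP => [/matrixP h|[/eqP-> /eqP->]].
  by move: (h 0 0) (h 1 0); rewrite col2E0 col2E1 !mxE => -> ->.
by apply/matrixP => i j; rewrite !mxE; case: ifP.
Qed.

Lemma mulmx_invmx2 K x : let d := K 0 0 * K 1 1 - K 0 1 * K 1 0 in d != 0 ->
  invmx K *m x = col2 ((K 1 1 * x 0 0 - K 0 1 * x 1 0) / d)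
                      ((K 0 0 * x 1 0 - K 1 0 * x 0 0) / d).
Proof.
move=> d; rewrite {}/d => d0.
pose N : 'M[R]_2 := \matrix_(i, j) ((if i == 0 then (if j == 0 then K 1 1 else - K 0 1)
   else (if j == 0 then - K 1 0 else K 0 0)) / (K 0 0 * K 1 1 - K 0 1 * K 1 0)).
have KN : K *m N = 1%:M.
  apply/matrixP => i j; rewrite mxE sum_ord2 !mxE.
  by case: (ord2P i) => ->; case: (ord2P j) => -> /=; field.
have [Ku _] := mulmx1_unit KN.
have -> : invmx K = N by rewrite -[invmx K]mulmx1 -KN mulmxA mulVmx // mul1mx.
apply/matrixP => i j; rewrite (ord1 j) mulmx2E !mxE.
by case: (ord2P i) => -> /=; field.
Qed.

(* [p q; q s] = (l1 w w^T + l2 w' w'^T) / |w|^2 with w = (u, v), w' = (-v, u). *)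
Lemma sym2_eigen (p q s : R) : exists u v l1 l2 : R,
  [/\ 0 < u ^+ 2 + v ^+ 2, p * (u ^+ 2 + v ^+ 2) = l1 * u ^+ 2 + l2 * v ^+ 2,
      q * (u ^+ 2 + v ^+ 2) = (l1 - l2) * u * v &
      s * (u ^+ 2 + v ^+ 2) = l1 * v ^+ 2 + l2 * u ^+ 2].
Proof.
have [->|q0] := eqVneq q 0.
  by exists 1, 0, p, s; split; rewrite ?expr0n ?expr1n /= ?addr0 ?mulr0 ?mulr1 ?ltr01 //; ring.
pose S := Num.sqrt ((p - s) ^+ 2 + 4 * q ^+ 2).
have SE : S ^+ 2 = (p - s) ^+ 2 + 4 * q ^+ 2.
  by rewrite sqr_sqrtr // addr_ge0 ?sqr_ge0 // mulr_ge0 ?sqr_ge0.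
pose l1 := (p + s + S) / 2; pose l2 := (p + s - S) / 2.
have qE : q ^+ 2 = (p - l2) * (l1 - p).
  have -> : (p - l2) * (l1 - p) = (S ^+ 2 - (p - s) ^+ 2) / 4 by rewrite /l1 /l2; field.
  by rewrite SE; field.
exists q, (l1 - p), l1, l2; split.
- by rewrite ltr_pwDl ?exprn_even_gt0 ?sqr_ge0.
- by rewrite qE; ring.
- by rewrite qE /l1 /l2; field.
- by rewrite qE /l1 /l2; field.
Qed.

End Matrix2.

Definition phi_term {R : realType} (c a w r : R) := c * a * w / (2 * c * a + r) ^+ 2.

Section PhiTerm.
Context {R : realType} (c a w : R).
Hypotheses (c_gt0 : 0 < c) (a_gt0 : 0 < a) (w_ge0 : 0 <= w).

Lemma phi_term_ge0 r : 0 <= phi_term c a w r.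
Proof. by rewrite /phi_term divr_ge0 ?sqr_ge0 // !mulr_ge0 // ltW. Qed.

Lemma phi_term_lipschitz r s : 0 <= r -> 0 <= s ->
  `|phi_term c a w r - phi_term c a w s| <= w / (4 * c ^+ 2 * a ^+ 2) * `|r - s|.
Proof.
move=> r_ge0 s_ge0; set d := 2 * c * a.
have d_gt0 : 0 < d by rewrite !mulr_gt0.
have [dr ds] : d <= d + r /\ d <= d + s by rewrite !lerDl.
have [dr0 ds0] : 0 < d + r /\ 0 < d + s by split; apply: lt_le_trans d_gt0 _.
have caw_ge0 : 0 <= c * a * w by rewrite !mulr_ge0 // ltW.
have cube_le (X Y : R) : d <= X -> d <= Y -> (X * Y ^+ 2)^-1 <= (d ^+ 3)^-1.
  move=> dX dY; have [X_gt0 Y_gt0] := (lt_le_trans d_gt0 dX, lt_le_trans d_gt0 dY).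
  rewrite lef_pV2 ?posrE ?exprn_gt0 ?mulr_gt0 ?exprn_gt0 // exprS.
  have d_ge0 := ltW d_gt0.
  by apply: ler_pM => //; [exact: sqr_ge0 | rewrite !expr2; exact: ler_pM].
have -> : phi_term c a w r - phi_term c a w s = c * a * w * (s - r) *
    (((d + r) * (d + s) ^+ 2)^-1 + ((d + s) * (d + r) ^+ 2)^-1).
  by rewrite /phi_term -/d; field; rewrite !gt_eqF.
rewrite mulrAC normrM distrC ler_wpM2r // ger0_norm; last first.
  by rewrite mulr_ge0 // addr_ge0 // invr_ge0 mulr_ge0 ?sqr_ge0 ?ltW.
apply: le_trans (ler_wpM2l caw_ge0 (lerD (cube_le _ _ dr ds) (cube_le _ _ ds dr))) _.
by rewrite le_eqVlt /d; apply/orP; left; apply/eqP; field; rewrite !gt_eqF.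
Qed.

End PhiTerm.

Lemma phi_term_sum_lipschitz {R : realType} (c rho a1 a2 a3 w1 w2 w3 r s : R) :
  0 < c -> 0 < a1 -> 0 < a2 -> 0 < a3 -> 0 <= w1 -> 0 <= w2 -> 0 <= w3 ->
  0 <= r -> 0 <= s ->
  `|(rho + phi_term c a1 w1 r + phi_term c a2 w2 r + phi_term c a3 w3 r)
    - (rho + phi_term c a1 w1 s + phi_term c a2 w2 s + phi_term c a3 w3 s)|
  <= (w1 / (4 * c ^+ 2 * a1 ^+ 2) + w2 / (4 * c ^+ 2 * a2 ^+ 2)
      + w3 / (4 * c ^+ 2 * a3 ^+ 2)) * `|r - s|.
Proof.
move=> c0 a10 a20 a30 w10 w20 w30 r0 s0.
have -> : forall x1 x2 x3 y1 y2 y3 : R,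
    rho + x1 + x2 + x3 - (rho + y1 + y2 + y3) = (x1 - y1) + (x2 - y2) + (x3 - y3)
  by move=> *; ring.
rewrite !(mulrDl _ _ `|r - s|); apply: le_trans (ler_normD _ _) _; apply: lerD;
  last exact: phi_term_lipschitz.
by apply: le_trans (ler_normD _ _) _; apply: lerD; exact: phi_term_lipschitz.
Qed.

Section Spectral.
Context {R : realType} {A : 'M[R]_2} {u v l1 l2 : R}.
Let n := u ^+ 2 + v ^+ 2.
Hypotheses (n_gt0 : 0 < n) (A_sym : A 1 0 = A 0 1).
Hypotheses (A00 : A 0 0 = (l1 * u ^+ 2 + l2 * v ^+ 2) / n)
  (A01 : A 0 1 = (l1 - l2) * u * v / n) (A11 : A 1 1 = (l1 * v ^+ 2 + l2 * u ^+ 2) / n).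

Let n_neq0 : n != 0. Proof. by rewrite gt_eqF. Qed.

Lemma spectral_quadratic_form (x y : R) : inner2 (col2 x y) (A *m col2 x y) =
   (l1 * (u * x + v * y) ^+ 2 + l2 * (u * y - v * x) ^+ 2) / n.
Proof. by rewrite inner2E !mulmx2E !col2E0 !col2E1 A_sym A00 A01 A11; field. Qed.

Lemma spectral_eigval_gt0 : spd2 A -> 0 < l1 /\ 0 < l2.
Proof.
have w_neq0 : col2 u v != 0 /\ col2 (- v) u != 0.
  rewrite !col2_eq0 oppr_eq0; split; apply: contraTN n_gt0 => /andP[/eqP x0 /eqP y0];
    by rewrite /n x0 y0 expr0n addr0 ltxx.
move=> [_ Apd]; move: (Apd _ w_neq0.1) (Apd _ w_neq0.2).
rewrite !spectral_quadratic_form.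
have -> : (l1 * (u * u + v * v) ^+ 2 + l2 * (u * v - v * u) ^+ 2) / n = l1 * n
  by rewrite /n; field.
have -> : (l1 * (u * - v + v * u) ^+ 2 + l2 * (u * u - v * - v) ^+ 2) / n = l2 * n
  by rewrite /n; field.
by rewrite !pmulr_lgt0.
Qed.

Hypotheses (l1_gt0 : 0 < l1) (l2_gt0 : 0 < l2).

Lemma spectral_phiE (c alpha beta rho : R) (m : 'cV[R]_2) (H rt : R) :
  0 < c -> 0 < alpha -> 0 < beta -> 0 <= rt ->
  phi c alpha beta rho A m H rt =
    rho + phi_term c (alpha * l1) ((u * m 0 0 + v * m 1 0) ^+ 2 / n) rt
        + phi_term c (alpha * l2) ((u * m 1 0 - v * m 0 0) ^+ 2 / n) rt
        + phi_term c beta (H ^+ 2) rt.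
Proof.
move=> c_gt0 a_gt0 b_gt0 rt_ge0; rewrite /phi.
have d_gt0 (a : R) : 0 < a -> 0 < 2 * c * a + rt.
  by move=> a_pos; rewrite ltr_wpDr // !mulr_gt0.
have d1 := d_gt0 _ (mulr_gt0 a_gt0 l1_gt0).
have d2 := d_gt0 _ (mulr_gt0 a_gt0 l2_gt0).
have d3 := d_gt0 _ b_gt0.
set K := 2 * c * alpha *: A + rt%:M.
have KE i j : K i j = 2 * c * alpha * A i j + rt *+ (i == j) by rewrite !mxE.
have Kdet : K 0 0 * K 1 1 - K 0 1 * K 1 0 =
    (2 * c * (alpha * l1) + rt) * (2 * c * (alpha * l2) + rt).
  by rewrite !KE /= mulr1n !mulr0n !addr0 A_sym A00 A01 A11 /n; field.
rewrite mulmx_invmx2 Kdet ?mulf_neq0 ?gt_eqF // inner2E !mulmx2E !col2E0 !col2E1.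
rewrite !KE !mxE /= mulr1n !mulr0n !addr0 A_sym A00 A01 A11 /phi_term /n; field.
by rewrite -/n n_neq0 !gt_eqF.
Qed.

Lemma spectral_inner_invmx2 (alpha : R) (m : 'cV[R]_2) : 0 < alpha ->
  inner2 m (invmx (alpha *: A) *m invmx (alpha *: A) *m m) =
    (u * m 0 0 + v * m 1 0) ^+ 2 / n / (alpha * l1) ^+ 2
  + (u * m 1 0 - v * m 0 0) ^+ 2 / n / (alpha * l2) ^+ 2.
Proof.
move=> a_gt0.
have Bdet : (alpha *: A) 0 0 * (alpha *: A) 1 1 - (alpha *: A) 0 1 * (alpha *: A) 1 0 =
    (alpha * l1) * (alpha * l2).
  by rewrite !mxE A_sym A00 A01 A11 /n; field.
have Bdet_neq0 : (alpha * l1) * (alpha * l2) != 0 by rewrite !mulf_neq0 ?gt_eqF.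
rewrite -mulmxA [invmx _ *m m]mulmx_invmx2 Bdet // mulmx_invmx2 Bdet //.
rewrite inner2E !col2E0 !col2E1 !mxE A_sym A00 A01 A11 /n; field.
by rewrite -/n n_neq0 !gt_eqF.
Qed.

End Spectral.

Lemma phi_spectral {R : realType} (c alpha beta rho : R) (A : 'M[R]_2)
    (m : 'cV[R]_2) (H : R) :
  0 < c -> 0 < alpha -> 0 < beta -> spd2 A ->
  exists a1 a2 w1 w2 : R, [/\ 0 < a1, 0 < a2, 0 <= w1 & 0 <= w2] /\
    (forall rt, 0 <= rt -> phi c alpha beta rho A m H rt =
       rho + phi_term c a1 w1 rt + phi_term c a2 w2 rt + phi_term c beta (H ^+ 2) rt) /\
    inner2 m (invmx (alpha *: A) *m invmx (alpha *: A) *m m) =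
       w1 / a1 ^+ 2 + w2 / a2 ^+ 2.
Proof.
move=> c_gt0 a_gt0 b_gt0 A_spd.
have A_sym : A 1 0 = A 0 1 by rewrite -{1}A_spd.1 mxE.
have [u [v [l1 [l2 [n_gt0 e00 e01 e11]]]]] := sym2_eigen (A 0 0) (A 0 1) (A 1 1).
have divE (x y : R) : x * (u ^+ 2 + v ^+ 2) = y -> x = y / (u ^+ 2 + v ^+ 2).
  by move=> <-; rewrite mulfK ?gt_eqF.
have A00 := divE _ _ e00; have A01 := divE _ _ e01; have A11 := divE _ _ e11.
have [l1_gt0 l2_gt0] := spectral_eigval_gt0 n_gt0 A_sym A00 A01 A11 A_spd.
exists (alpha * l1), (alpha * l2), ((u * m 0 0 + v * m 1 0) ^+ 2 / (u ^+ 2 + v ^+ 2)),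
  ((u * m 1 0 - v * m 0 0) ^+ 2 / (u ^+ 2 + v ^+ 2)).
split; first by split; rewrite ?mulr_gt0 // divr_ge0 ?sqr_ge0 ?ltW.
split; first by move=> rt; exact: spectral_phiE.
exact: spectral_inner_invmx2.
Qed.

Lemma contraction_iter_cvg {R : realType} {X : completeNormedModType R}
    {U : set X} {f : {fun U >-> U}} {q : {nonneg R}} {p x : X} :
  contraction q f -> closed U -> U p -> p = f p -> U x ->
  iter n f x @[n --> \oo] --> p.
Proof.
move=> ctrf clU Up fp Ux.
have y_cvg := contraction_cvg ctrf Ux.
have Ul : U (limn (fun n => iter n f x)).
  by apply: closed_cvg y_cvg => //; apply: nearW => n; exact: funS.
rewrite -(contraction_fixpoint_unique (ex_intro _ q ctrf) Ul Up _ fp) //.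
exact: (contraction_cvg_fixed ctrf Ux clU).
Qed.

Lemma halfline_contraction_fixpoint {R : realType} (f : R -> R) (rho k : R) :
  0 < rho -> 0 <= k -> k < 1 ->
  (forall r, 0 <= r -> rho <= f r) ->
  (forall r s, 0 <= r -> 0 <= s -> `|f r - f s| <= k * `|r - s|) ->
  exists rstar : R, [/\ 0 < rstar, f rstar = rstar,
    (forall r, 0 < r -> f r = r -> r = rstar) &
    (forall r0, 0 < r0 -> iter n f r0 @[n --> \oo] --> rstar)].
Proof.
move=> rho_gt0 k_ge0 k_lt1 f_ge f_lip.
pose U := [set x : R | 0 <= x].
have fU : set_fun U U f by move=> r /f_ge; apply: le_trans; exact: ltW.
pose g : {fun U >-> U} := HB.pack f (isFun.Build _ _ U U f fU).
have ctrg : contraction (NngNum k_ge0) g by split => // -[r s] [/= r0 s0]; exact: f_lip.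
have is_ctrg : is_contraction g by exists (NngNum k_ge0).
have clU : closed U by exact: closed_ge.
have [p Up fp] := banach_fixed_point is_ctrg clU (ex_intro _ 0 (lexx 0)).
exists p; split => //.
- by rewrite fp; exact: lt_le_trans rho_gt0 (f_ge _ Up).
- by move=> r r_gt0 fr; apply: (contraction_fixpoint_unique is_ctrg) => //; exact: ltW.
- by move=> r0 r0_gt0; exact: (contraction_iter_cvg ctrg clU Up fp (ltW r0_gt0)).
Qed.

Theorem mainTheorem15 (R : realType) (c alpha beta rho : R) (A : 'M[R]_2)
    (m : 'cV[R]_2) (H : R) :
  0 < c -> 0 < alpha -> 0 < beta -> spd2 A -> 0 < rho ->
  (4 * c ^+ 2)^-1 *
    (inner2 m (invmx (alpha *: A) *m invmx (alpha *: A) *m m) + beta ^- 2 * H ^+ 2) < 1 ->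
  exists rstar : R,
    [/\ 0 < rstar, phi c alpha beta rho A m H rstar = rstar,
        (forall r : R, 0 < r -> phi c alpha beta rho A m H r = r -> r = rstar) &
        (forall r0 : R, 0 < r0 ->
           iter n (phi c alpha beta rho A m H) r0 @[n --> \oo] --> rstar)].
Proof.
move=> c_gt0 a_gt0 b_gt0 A_spd rho_gt0.
have [a1 [a2 [w1 [w2 [[a1_gt0 a2_gt0 w1_ge0 w2_ge0] [phiE ->]]]]]] :=
  phi_spectral c alpha beta rho A m H c_gt0 a_gt0 b_gt0 A_spd.
have H2_ge0 : 0 <= H ^+ 2 := sqr_ge0 H.
have -> : (4 * c ^+ 2)^-1 * (w1 / a1 ^+ 2 + w2 / a2 ^+ 2 + beta ^- 2 * H ^+ 2) =
    w1 / (4 * c ^+ 2 * a1 ^+ 2) + w2 / (4 * c ^+ 2 * a2 ^+ 2)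
    + H ^+ 2 / (4 * c ^+ 2 * beta ^+ 2).
  by field; rewrite !gt_eqF.
move=> k_lt1; apply: halfline_contraction_fixpoint rho_gt0 _ k_lt1 _ _.
- have lip_ge0 (w a : R) : 0 <= w -> 0 < a -> 0 <= w / (4 * c ^+ 2 * a ^+ 2).
    by move=> w_ge0 a_pos; rewrite divr_ge0 // ltW // !mulr_gt0 // exprn_gt0.
  by rewrite !addr_ge0 ?lip_ge0.
- by move=> r r_ge0; rewrite phiE // -!addrA lerDl !addr_ge0 // phi_term_ge0.
- by move=> r s r_ge0 s_ge0; rewrite !phiE //; exact: phi_term_sum_lipschitz.
Qed.
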